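(* Let $f=p/q$ be a rational function with $p,q$ of degree $l$, positive on the standard simplex $\Delta$, with $b_\alpha(q,j,\Delta)>0$ for all $|\alpha|=j$, $j\ge l$. Then there exists $k\ge l$ such that $\min_{|\alpha|=k} b_\alpha(f,k,\Delta)>0$.
   Context: $\Delta$ is the standard simplex in $\mathbb{R}^n$ with barycentric coordinates $\lambda=(1-\sum x_i,x_1,\dots,x_n)$; $B^{(k)}_\alpha=\frac{k!}{\alpha_0!\cdots\alpha_n!}\lambda^\alpha$ ($\alpha\in\mathbb{N}^{n+1}$, $|\alpha|=k$) are the Bernstein polynomials of degree $k$; $b_\alpha(p,k,\Delta)$ denote the coefficients of $p$ in this basis and $b_\alpha(f,k,\Delta)=b_\alpha(p,k,\Delta)/b_\alpha(q,k,\Delta)$ are the rational Bernstein coefficients. *)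

From Stdlib Require Import Reals List Arith.
Import ListNotations.
Open Scope R_scope.

Fixpoint compositions (m k : nat) : list (list nat) :=
  match m with
  | O => match k with O => [[]] | S _ => [] end
  | S m' => flat_map (fun i => map (cons i) (compositions m' (k - i)))
                     (seq 0 (S k))
  end.

Definition monomials (n l : nat) : list (list nat) :=
  flat_map (fun d => compositions n d) (seq 0 (S l)).

Definition sumR {A : Type} (s : list A) (f : A -> R) : R :=
  fold_right (fun a acc => f a + acc) 0 s.

Fixpoint prodpow (x : nat -> R) (i : nat) (beta : list nat) : R :=
  match beta with
  | [] => 1
  | b :: bs => x i ^ b * prodpow x (S i) bs
  end.

(* A polynomial in n variables x_1..x_n (stored as x 0 .. x (n-1)) of degree
   at most l is given by its coefficient function c on exponent vectors;
   only the coefficients of the monomials with |beta| <= l matter. *)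
Definition peval (n l : nat) (c : list nat -> R) (x : nat -> R) : R :=
  sumR (monomials n l) (fun beta => c beta * prodpow x 0 beta).

Definition bary (n : nat) (x : nat -> R) (i : nat) : R :=
  match i with
  | O => 1 - sumR (seq 0 n) x
  | S j => x j
  end.

Definition in_simplex (n : nat) (x : nat -> R) : Prop :=
  (forall i, (i < n)%nat -> 0 <= x i) /\ sumR (seq 0 n) x <= 1.

Definition multinom (k : nat) (alpha : list nat) : R :=
  INR (fact k) / fold_right (fun a acc => INR (fact a) * acc) 1 alpha.

Definition bernstein (n k : nat) (alpha : list nat) (x : nat -> R) : R :=
  multinom k alpha * prodpow (bary n x) 0 alpha.

Definition is_bernstein_coeffs (n l : nat) (c : list nat -> R) (k : nat)
    (b : list nat -> R) : Prop :=
  forall x : nat -> R,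
    peval n l c x = sumR (compositions (S n) k) (fun alpha => b alpha * bernstein n k alpha x).

From Stdlib Require Import Reals List Arith Lra Lia ClassicalEpsilon.
Open Scope R_scope.

(** The proof is the
    classical Polya/Bernstein degree-elevation argument.
    - Degree elevation gives explicit coefficients [bern_coeff]: every
      monomial [x^beta] is [sum_alpha elevation_weight k beta alpha * B_alpha],
      a consequence of a generalized multinomial theorem.
    - Rescaled by [(k)_l / k^l], the coefficient of index [alpha] differs from
      the value of the polynomial at the grid point [alpha'/k] by [O(l^2/k)].
    - A polynomial positive on the (compact) simplex is bounded below there by
      some [eps > 0]; hence its coefficients are positive for [k] large.
    - [q] is positive on the simplex (its coefficients are), so [p] is too;
      the hypothesis on [q] also forces uniqueness of the coefficients, so
      every coefficient family of [p] of degree [k] is positive, and the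
      rational coefficients [b_alpha(p) / b_alpha(q)] are positive. *)

Lemma sumR_app {A} (s t : list A) f : sumR (s ++ t) f = sumR s f + sumR t f.
Proof. induction s; simpl; [lra | rewrite IHs; lra]. Qed.

Lemma sumR_map {A B} (g : A -> B) s f : sumR (map g s) f = sumR s (fun a => f (g a)).
Proof. induction s; simpl; [reflexivity | now rewrite IHs]. Qed.

Lemma sumR_flat_map {A B} (g : A -> list B) s f :
  sumR (flat_map g s) f = sumR s (fun a => sumR (g a) f).
Proof. induction s; simpl; [reflexivity | now rewrite sumR_app, IHs]. Qed.

Lemma sumR_ext {A} (s : list A) f g :
  (forall a, In a s -> f a = g a) -> sumR s f = sumR s g.
Proof. induction s; simpl; intros H; [reflexivity | rewrite H, IHs; auto]. Qed.

Lemma sumR_plus {A} (s : list A) f g :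
  sumR s (fun a => f a + g a) = sumR s f + sumR s g.
Proof. induction s; simpl; [lra | rewrite IHs; lra]. Qed.

Lemma sumR_minus {A} (s : list A) f g :
  sumR s (fun a => f a - g a) = sumR s f - sumR s g.
Proof. induction s; simpl; [lra | rewrite IHs; lra]. Qed.

Lemma sumR_scal {A} (s : list A) c f : sumR s (fun a => c * f a) = c * sumR s f.
Proof. induction s; simpl; [lra | rewrite IHs; lra]. Qed.

Lemma sumR_scalr {A} (s : list A) c f : sumR s (fun a => f a * c) = sumR s f * c.
Proof. induction s; simpl; [lra | rewrite IHs; lra]. Qed.

Lemma sumR_const {A} (s : list A) d : sumR s (fun _ => d) = INR (length s) * d.
Proof. induction s; simpl sumR; simpl length; [simpl; lra | rewrite S_INR, IHs; lra]. Qed.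

Lemma sumR_zero {A} (s : list A) : sumR s (fun _ => 0) = 0.
Proof. rewrite sumR_const; lra. Qed.

Lemma sumR_swap {A B} (s : list A) (t : list B) f :
  sumR s (fun a => sumR t (fun b => f a b)) = sumR t (fun b => sumR s (fun a => f a b)).
Proof.
  induction s; simpl.
  - symmetry; apply sumR_zero.
  - now rewrite IHs, <- sumR_plus.
Qed.

Lemma sumR_le {A} (s : list A) f g :
  (forall a, In a s -> f a <= g a) -> sumR s f <= sumR s g.
Proof.
  induction s; simpl; intros H; [lra |].
  assert (f a <= g a) by auto. assert (sumR s f <= sumR s g) by auto. lra.
Qed.

Lemma sumR_nonneg {A} (s : list A) f : (forall a, In a s -> 0 <= f a) -> 0 <= sumR s f.
Proof. intros. rewrite <- (sumR_zero s). now apply sumR_le. Qed.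

Lemma sumR_abs {A} (s : list A) f : Rabs (sumR s f) <= sumR s (fun a => Rabs (f a)).
Proof.
  induction s; simpl.
  - rewrite Rabs_R0; lra.
  - eapply Rle_trans; [apply Rabs_triang | lra].
Qed.

Lemma sumR_ge_term {A} (s : list A) f a :
  (forall b, In b s -> 0 <= f b) -> In a s -> f a <= sumR s f.
Proof.
  induction s; simpl; intros H Ha; [contradiction |].
  destruct Ha as [<- | Ha].
  - assert (0 <= sumR s f) by (apply sumR_nonneg; auto). lra.
  - assert (f a <= sumR s f) by auto. assert (0 <= f a0) by auto. lra.
Qed.

Lemma sumR_pos_ex {A} (s : list A) f : 0 < sumR s f -> exists a, In a s /\ 0 < f a.
Proof.
  induction s; simpl; intros H; [lra |].
  destruct (Rlt_dec 0 (f a)) as [Ha | Ha]; [exists a; auto |].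
  destruct IHs as [b [Hb Hfb]]; [lra | exists b; auto].
Qed.

Lemma sumR_seq_shift (m i : nat) f :
  sumR (seq (S i) m) f = sumR (seq i m) (fun j => f (S j)).
Proof. now rewrite <- seq_shift, sumR_map. Qed.

Lemma sumR_sum_f (N : nat) f : sumR (seq 0 (S N)) f = sum_f_R0 f N.
Proof.
  induction N; [simpl; lra |].
  rewrite seq_S, sumR_app, IHN; simpl; lra.
Qed.

Lemma sumR_diff_le n u v d : (forall i, (i < n)%nat -> Rabs (u i - v i) <= d) ->
  Rabs (sumR (seq 0 n) u - sumR (seq 0 n) v) <= INR n * d.
Proof.
  intros H. rewrite <- sumR_minus.
  eapply Rle_trans; [apply sumR_abs |].
  rewrite <- (length_seq n 0) at 2. rewrite <- sumR_const.
  apply sumR_le. intros i Hi. apply in_seq in Hi. apply H. lia.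
Qed.

Lemma compositions_spec m k a :
  In a (compositions m k) -> length a = m /\ list_sum a = k.
Proof.
  revert k a; induction m; intros k a H.
  - destruct k; simpl in H; [destruct H as [<- | []]; auto | contradiction].
  - change (In a (flat_map (fun i => map (cons i) (compositions m (k - i)))
                             (seq 0 (S k)))) in H.
    apply in_flat_map in H as [i [Hi H]].
    apply in_map_iff in H as [a' [<- H]].
    apply IHm in H as [H1 H2]. apply in_seq in Hi. simpl. split; [auto | lia].
Qed.

Lemma monomials_spec n l be :
  In be (monomials n l) -> length be = n /\ (list_sum be <= l)%nat.
Proof.
  unfold monomials. intros H. apply in_flat_map in H as [d [Hd H]].
  apply compositions_spec in H as [? ?]. apply in_seq in Hd. split; [auto | lia].
Qed.

Lemma elem_le_list_sum (s : list nat) a : In a s -> (a <= list_sum s)%nat.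
Proof.
  induction s; simpl; intros H; [contradiction |].
  destruct H as [-> | H]; [lia | apply IHs in H; lia].
Qed.

Lemma sumR_nth (s : list nat) :
  sumR (seq 0 (length s)) (fun i => INR (nth i s 0%nat)) = INR (list_sum s).
Proof.
  induction s; simpl; [reflexivity |].
  rewrite sumR_seq_shift. simpl. rewrite IHs, plus_INR. lra.
Qed.

Fixpoint falling (a : R) (g : nat) : R :=
  match g with O => 1 | S g' => falling a g' * (a - INR g') end.

Lemma fact_pos_R a : 0 < INR (fact a).
Proof. apply lt_0_INR, lt_O_fact. Qed.

Lemma falling_add a d e : falling a (d + e) = falling a d * falling (a - INR d) e.
Proof.
  induction e; simpl.
  - rewrite Nat.add_0_r; ring.
  - rewrite Nat.add_succ_r; simpl. rewrite IHe, plus_INR. ring.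
Qed.

Lemma falling_nat_zero a g : (a < g)%nat -> falling (INR a) g = 0.
Proof.
  induction g; intros H; [lia |]. simpl.
  destruct (Nat.eq_dec a g) as [-> | Hne]; [lra |].
  rewrite IHg by lia. lra.
Qed.

Lemma falling_nat_fact a g :
  (g <= a)%nat -> falling (INR a) g * INR (fact (a - g)) = INR (fact a).
Proof.
  induction g; intros H; simpl.
  - rewrite Nat.sub_0_r. lra.
  - replace (a - g)%nat with (S (a - S g)) in IHg by lia.
    rewrite fact_simpl, mult_INR, S_INR in IHg. rewrite <- IHg by lia.
    rewrite minus_INR, S_INR by lia. ring.
Qed.

Lemma falling_nat_pos k d : (d <= k)%nat -> 0 < falling (INR k) d.
Proof.
  intros H. pose proof (falling_nat_fact k d H). pose proof (fact_pos_R k).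
  pose proof (fact_pos_R (k - d)). nra.
Qed.

Lemma falling_nat_div a g : falling (INR a) g / INR (fact a) =
  if (g <=? a)%nat then / INR (fact (a - g)) else 0.
Proof.
  destruct (Nat.leb_spec g a) as [H | H].
  - rewrite <- (falling_nat_fact a g H).
    pose proof (fact_pos_R (a - g)). pose proof (falling_nat_pos a g H).
    field. lra.
  - rewrite falling_nat_zero by auto. unfold Rdiv; ring.
Qed.

(** With [trunc_exp s k d = s^(k-d) / (k-d)!] (and [0] when [d > k]) the
    generalized multinomial theorem
      sum_{|alpha| = k} prod_i (alpha_i)_(g_i) / alpha_i! * lambda^alpha
        = lambda^g * trunc_exp (sum_i lambda_i) k |g|
    applied to [lambda = bary n x] (whose coordinates sum to 1) expresses
    every monomial [x^beta] with [|beta| <= k] in the Bernstein basis. *)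

Definition trunc_exp (s : R) (k d : nat) : R :=
  if (d <=? k)%nat then s ^ (k - d) / INR (fact (k - d)) else 0.

Lemma trunc_exp_zero s k d : (k < d)%nat -> trunc_exp s k d = 0.
Proof. intros. unfold trunc_exp. destruct (Nat.leb_spec d k); [lia | auto]. Qed.

Definition fact_prod (al : list nat) : R :=
  fold_right (fun a acc => INR (fact a) * acc) 1 al.

Fixpoint falling_prod (al ga : list nat) : R :=
  match al, ga with
  | a :: al', g :: ga' => falling (INR a) g * falling_prod al' ga'
  | _, _ => 1
  end.

Lemma map_add_seq g N s : map (fun b => g + b)%nat (seq s N) = seq (g + s) N.
Proof.
  revert s; induction N; intros; simpl; [reflexivity |].
  rewrite IHN. do 2 f_equal. lia.
Qed.

Lemma seq_split3 g N d : seq 0 (g + S N + d) =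
  seq 0 g ++ map (fun b => g + b)%nat (seq 0 (S N)) ++ seq (g + S N) d.
Proof.
  rewrite !seq_app, <- app_assoc, map_add_seq. do 3 f_equal. lia.
Qed.

(* One-variable step of the multinomial identity: only [g <= a <= k - d]
   contributes, and the remaining sum is a binomial expansion. *)
Lemma binomial_falling_sum g d k u s :
  sumR (seq 0 (S k))
    (fun a => falling (INR a) g / INR (fact a) * u ^ a * trunc_exp s (k - a) d)
  = u ^ g * trunc_exp (u + s) k (g + d).
Proof.
  destruct (le_lt_dec (g + d) k) as [Hle | Hlt].
  - set (N := (k - g - d)%nat).
    replace (S k) with (g + S N + d)%nat by (unfold N; lia).
    rewrite seq_split3, !sumR_app, sumR_map.
    rewrite (sumR_ext (seq 0 g) _ (fun _ => 0)).
    2:{ intros a Ha. apply in_seq in Ha. rewrite falling_nat_zero by lia.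
        unfold Rdiv; ring. }
    rewrite (sumR_ext (seq (g + S N) d) _ (fun _ => 0)).
    2:{ intros a Ha. apply in_seq in Ha. rewrite trunc_exp_zero by (unfold N in *; lia).
        ring. }
    rewrite !sumR_zero, Rplus_0_l, Rplus_0_r.
    unfold trunc_exp at 2. destruct (Nat.leb_spec (g + d) k); [| lia].
    replace (k - (g + d))%nat with N by (unfold N; lia).
    rewrite binomial, <- sumR_sum_f.
    unfold Rdiv. rewrite <- sumR_scalr, <- sumR_scal.
    apply sumR_ext. intros b Hb. apply in_seq in Hb.
    pose proof (falling_nat_div (g + b) g) as Hdiv. unfold Rdiv in Hdiv. rewrite Hdiv.
    destruct (Nat.leb_spec g (g + b)); [| lia].
    unfold trunc_exp. destruct (Nat.leb_spec d (k - (g + b))); [| unfold N in *; lia].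
    replace (g + b - g)%nat with b by lia.
    replace (k - (g + b) - d)%nat with (N - b)%nat by (unfold N; lia).
    unfold C. rewrite pow_add.
    pose proof (fact_pos_R b). pose proof (fact_pos_R (N - b)). pose proof (fact_pos_R N).
    field. lra.
  - rewrite (trunc_exp_zero _ k) by lia. rewrite Rmult_0_r, <- (sumR_zero (seq 0 (S k))).
    apply sumR_ext. intros a Ha. apply in_seq in Ha.
    destruct (le_lt_dec g a).
    + rewrite trunc_exp_zero by lia. ring.
    + rewrite falling_nat_zero by lia. unfold Rdiv; ring.
Qed.

Lemma multinomial_falling_sum m : forall ga, length ga = m -> forall k i (lam : nat -> R),
  sumR (compositions m k)
       (fun al => falling_prod al ga / fact_prod al * prodpow lam i al)
  = prodpow lam i ga * trunc_exp (sumR (seq i m) lam) k (list_sum ga).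
Proof.
  induction m; intros ga Hl k i lam.
  - destruct ga; [| discriminate].
    destruct k; simpl; unfold trunc_exp; simpl; [field | lra].
  - destruct ga as [| g ga']; [discriminate |]. simpl in Hl. injection Hl as Hl.
    change (compositions (S m) k) with
      (flat_map (fun i => map (cons i) (compositions m (k - i))) (seq 0 (S k))).
    rewrite sumR_flat_map.
    rewrite (sumR_ext _ _ (fun a => prodpow lam (S i) ga' *
       (falling (INR a) g / INR (fact a) * lam i ^ a *
        trunc_exp (sumR (seq (S i) m) lam) (k - a) (list_sum ga')))).
    2:{ intros a _. rewrite sumR_map.
        rewrite (sumR_ext _ _ (fun al' => (falling (INR a) g / INR (fact a) * lam i ^ a) *
              (falling_prod al' ga' / fact_prod al' * prodpow lam (S i) al'))).
        2:{ intros al' _. simpl. unfold Rdiv. rewrite Rinv_mult. ring. }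
        rewrite sumR_scal, IHm by auto. ring. }
    rewrite sumR_scal, binomial_falling_sum. simpl. ring.
Qed.

Lemma bary_sum n x : sumR (seq 0 (S n)) (bary n x) = 1.
Proof.
  change (seq 0 (S n)) with (0%nat :: seq 1 n). simpl sumR.
  rewrite sumR_seq_shift. simpl. change (fun j : nat => x j) with x. lra.
Qed.

Lemma prodpow_shift f i be : prodpow f (S i) be = prodpow (fun j => f (S j)) i be.
Proof. revert i; induction be; intros; simpl; [reflexivity | now rewrite IHbe]. Qed.

(* The weight of [B^(k)_alpha] in the expansion of the monomial [x^beta]. *)
Definition elevation_weight (k : nat) (beta alpha : list nat) : R :=
  falling_prod alpha (0%nat :: beta) / falling (INR k) (list_sum beta).

Lemma monomial_in_bernstein n k be x : length be = n -> (list_sum be <= k)%nat ->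
  sumR (compositions (S n) k)
       (fun al => elevation_weight k be al * bernstein n k al x)
  = prodpow x 0 be.
Proof.
  intros Hl Hk.
  rewrite (sumR_ext _ _ (fun al => (INR (fact k) / falling (INR k) (list_sum be)) *
     (falling_prod al (0%nat :: be) / fact_prod al * prodpow (bary n x) 0 al))).
  2:{ intros al _. unfold elevation_weight, bernstein, multinom, fact_prod.
      unfold Rdiv. ring. }
  rewrite sumR_scal, multinomial_falling_sum by (simpl; auto).
  rewrite bary_sum. simpl list_sum. simpl prodpow. rewrite prodpow_shift.
  change (fun j => bary n x (S j)) with x.
  unfold trunc_exp. destruct (Nat.leb_spec (list_sum be) k); [| lia].
  rewrite pow1, <- (falling_nat_fact k (list_sum be)) by auto.
  pose proof (falling_nat_pos k (list_sum be) Hk).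
  pose proof (fact_pos_R (k - list_sum be)).
  field; split; lra.
Qed.

Definition bern_coeff (n l : nat) (c : list nat -> R) (k : nat) (al : list nat) : R :=
  sumR (monomials n l) (fun be => c be * elevation_weight k be al).

Lemma bern_coeff_spec n l c k : (l <= k)%nat -> is_bernstein_coeffs n l c k (bern_coeff n l c k).
Proof.
  intros Hk x. unfold peval, bern_coeff.
  rewrite (sumR_ext (monomials n l) _ (fun be => sumR (compositions (S n) k)
     (fun al => c be * elevation_weight k be al * bernstein n k al x))).
  2:{ intros be Hbe. apply monomials_spec in Hbe as [H1 H2].
      rewrite <- (monomial_in_bernstein n k be x H1) by lia. rewrite <- sumR_scal.
      apply sumR_ext. intros; ring. }
  rewrite sumR_swap. apply sumR_ext. intros al _. now rewrite sumR_scalr.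
Qed.

(* Taking [beta = 0]: the Bernstein polynomials form a partition of unity. *)
Lemma bernstein_sum_one n k x :
  sumR (compositions (S n) k) (fun al => bernstein n k al x) = 1.
Proof.
  set (zero := repeat 0%nat n).
  assert (Hs : list_sum zero = 0%nat) by (unfold zero; clear; induction n; simpl; auto).
  assert (Hx : forall i, prodpow x i zero = 1).
  { unfold zero; clear; induction n; intros i; simpl; [| rewrite IHn]; lra. }
  assert (Hw : forall al, elevation_weight k zero al = 1).
  { intros al. unfold elevation_weight. rewrite Hs.
    change (0%nat :: zero) with (repeat 0%nat (S n)).
    assert (Hp : forall m, falling_prod al (repeat 0%nat m) = 1).
    { clear; induction al; intros [| m]; simpl; try rewrite IHal; lra. }
    rewrite Hp. simpl; lra. }
  rewrite <- (Hx 0%nat), <- (monomial_in_bernstein n k);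
    [| apply repeat_length | rewrite Hs; lia].
  apply sumR_ext. intros al _. rewrite Hw. ring.
Qed.

Lemma Rabs_mult_le1 a b : Rabs a <= 1 -> Rabs b <= 1 -> Rabs (a * b) <= 1.
Proof.
  intros. rewrite Rabs_mult, <- (Rmult_1_l 1).
  apply Rmult_le_compat; auto; apply Rabs_pos.
Qed.

Lemma Rabs_pow_le1 a g : Rabs a <= 1 -> Rabs (a ^ g) <= 1.
Proof.
  intros; induction g; simpl; [rewrite Rabs_R1; lra | now apply Rabs_mult_le1].
Qed.

Lemma Rabs_mult_diff_le a b c d : Rabs a <= 1 -> Rabs d <= 1 ->
  Rabs (a * c - b * d) <= Rabs (a - b) + Rabs (c - d).
Proof.
  intros Ha Hd. replace (a * c - b * d) with (a * (c - d) + (a - b) * d) by ring.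
  eapply Rle_trans; [apply Rabs_triang |]. rewrite !Rabs_mult.
  pose proof (Rabs_pos (c - d)). pose proof (Rabs_pos (a - b)). nra.
Qed.

Lemma Rabs_pow_diff_le g a b e : Rabs a <= 1 -> Rabs b <= 1 -> Rabs (a - b) <= e ->
  Rabs (a ^ g - b ^ g) <= INR g * e.
Proof.
  intros Ha Hb He. induction g; simpl pow.
  - rewrite Rminus_diag, Rabs_R0; simpl; lra.
  - eapply Rle_trans; [apply Rabs_mult_diff_le; auto; now apply Rabs_pow_le1 |].
    rewrite S_INR; lra.
Qed.

Lemma Rabs_div_le1 a k : 0 < k -> -k <= a <= k -> Rabs (a / k) <= 1.
Proof.
  intros Hk Ha. unfold Rdiv. rewrite Rabs_mult, Rabs_inv, (Rabs_right k) by lra.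
  apply Rmult_le_reg_r with k; [lra |]. rewrite Rmult_assoc, Rinv_l by lra.
  apply Rabs_le in Ha. lra.
Qed.

Lemma pow_one_minus_close m a : 0 <= a <= 1 -> Rabs ((1 - a) ^ m - 1) <= INR m * a.
Proof.
  intros Ha. rewrite <- (pow1 m) at 2. apply Rabs_pow_diff_le.
  - apply Rabs_le; lra.
  - rewrite Rabs_R1; lra.
  - replace (1 - a - 1) with (- a) by ring. rewrite Rabs_Ropp, Rabs_right; lra.
Qed.

Lemma falling_scaled_close g (a k L : R) : 0 < k -> 0 <= a <= k -> INR g <= L -> L <= k ->
  Rabs (falling a g / k ^ g - (a / k) ^ g) <= INR g * (L / k) /\
  Rabs (falling a g / k ^ g) <= 1.
Proof.
  intros Hk Ha. induction g; intros Hg HL.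
  - simpl. rewrite Rdiv_1_r, Rminus_diag, Rabs_R0, Rabs_R1. lra.
  - rewrite S_INR in Hg. pose proof (pos_INR g).
    destruct IHg as [IH1 IH2]; try lra.
    assert (E : falling a (S g) / k ^ S g = ((a - INR g) / k) * (falling a g / k ^ g)).
    { simpl. field. split; [apply pow_nonzero |]; lra. }
    assert (HA : Rabs ((a - INR g) / k) <= 1) by (apply Rabs_div_le1; lra).
    assert (HB : Rabs (a / k) <= 1) by (apply Rabs_div_le1; lra).
    assert (Hstep : Rabs ((a - INR g) / k - a / k) <= L / k).
    { replace ((a - INR g) / k - a / k) with (- (INR g / k)) by (field; lra).
      rewrite Rabs_Ropp, Rabs_right.
      - apply Rmult_le_compat_r; [left; apply Rinv_0_lt_compat |]; lra.
      - apply Rle_ge, Rmult_le_pos; [| left; apply Rinv_0_lt_compat]; lra. }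
    rewrite E. simpl pow at 2. split.
    + eapply Rle_trans; [apply Rabs_mult_diff_le; auto; now apply Rabs_pow_le1 |].
      rewrite S_INR. lra.
    + now apply Rabs_mult_le1.
Qed.

Lemma prodpow_le1 f i be :
  (forall j, (j < length be)%nat -> Rabs (f (i + j)%nat) <= 1) ->
  Rabs (prodpow f i be) <= 1.
Proof.
  revert i; induction be; intros i H; simpl; [rewrite Rabs_R1; lra |].
  apply Rabs_mult_le1.
  - apply Rabs_pow_le1. rewrite <- (Nat.add_0_r i). apply H. simpl; lia.
  - apply IHbe. intros j Hj. replace (S i + j)%nat with (i + S j)%nat by lia.
    apply H. simpl; lia.
Qed.

Definition grid_point (al : list nat) (k : nat) : nat -> R :=
  fun i => INR (nth i al 0%nat) / INR k.

Lemma grid_point_le1 (al : list nat) k : (0 < k)%nat ->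
  (forall a, In a al -> (a <= k)%nat) -> forall j, Rabs (grid_point al k j) <= 1.
Proof.
  intros Hk H j. assert (0 < INR k) by (apply lt_0_INR; lia).
  unfold grid_point. apply Rabs_div_le1; auto. pose proof (pos_INR (nth j al 0%nat)).
  destruct (nth_in_or_default j al 0%nat) as [Hi | ->].
  - apply H, le_INR in Hi. lra.
  - simpl; lra.
Qed.

Lemma falling_prod_close be : forall al k L, (0 < k)%nat -> length al = length be ->
  (forall a, In a al -> (a <= k)%nat) -> (forall g, In g be -> INR g <= L) -> L <= INR k ->
  Rabs (falling_prod al be / INR k ^ list_sum be - prodpow (grid_point al k) 0 be)
    <= INR (list_sum be) * (L / INR k) /\
  Rabs (falling_prod al be / INR k ^ list_sum be) <= 1.
Proof.
  assert (Hshift : forall a al k be,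
    prodpow (grid_point (a :: al) k) 1 be = prodpow (grid_point al k) 0 be).
  { intros. now rewrite prodpow_shift. }
  induction be as [| g be IH]; intros al k L Hk Hl Hal Hbe HL.
  - simpl. rewrite Rdiv_1_r.
    destruct al; simpl; rewrite Rminus_diag, Rabs_R0, ?Rabs_R1; lra.
  - destruct al as [| a al]; [discriminate |]. simpl in Hl. injection Hl as Hl.
    assert (HkR : 0 < INR k) by (apply lt_0_INR; lia).
    assert (Ha : 0 <= INR a <= INR k).
    { split; [apply pos_INR | apply le_INR, Hal; simpl; auto]. }
    destruct (falling_scaled_close g (INR a) (INR k) L HkR Ha) as [F1 F2];
      [apply Hbe; simpl; auto | auto |].
    destruct (IH al k L Hk Hl) as [I1 I2]; [intros; apply Hal; simpl; auto |
      intros; apply Hbe; simpl; auto | auto |].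
    assert (E : falling_prod (a :: al) (g :: be) / INR k ^ list_sum (g :: be) =
                (falling (INR a) g / INR k ^ g) * (falling_prod al be / INR k ^ list_sum be)).
    { simpl. rewrite pow_add. field. split; apply pow_nonzero; lra. }
    rewrite E. simpl prodpow. rewrite Hshift. split.
    + eapply Rle_trans; [apply Rabs_mult_diff_le; auto |].
      * apply prodpow_le1. intros; apply grid_point_le1; auto. intros; apply Hal; simpl; auto.
      * change (grid_point (a :: al) k 0) with (INR a / INR k).
        simpl list_sum. rewrite plus_INR. lra.
    + now apply Rabs_mult_le1.
Qed.

(* [elevation_weight k beta alpha] rescaled by [(k)_l / k^l]; it only
   depends on [alpha'] when [alpha = alpha_0 :: alpha']. *)
Definition scaled_weight (k l : nat) (al' be : list nat) : R :=
  falling_prod al' be / INR k ^ list_sum be *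
  (falling (INR k - INR (list_sum be)) (l - list_sum be) / INR k ^ (l - list_sum be)).

Lemma elevation_weight_rescale k l be a0 al' :
  (list_sum be <= l)%nat -> (l <= k)%nat ->
  elevation_weight k be (a0 :: al') * (falling (INR k) l / INR k ^ l)
  = scaled_weight k l al' be.
Proof.
  intros Hd Hl. unfold elevation_weight, scaled_weight. simpl falling_prod. simpl falling.
  assert (Hf : falling (INR k) l = falling (INR k) (list_sum be) *
               falling (INR k - INR (list_sum be)) (l - list_sum be))
    by (rewrite <- falling_add; f_equal; lia).
  assert (Hp : INR k ^ l = INR k ^ list_sum be * INR k ^ (l - list_sum be))
    by (rewrite <- pow_add; f_equal; lia).
  rewrite Hf, Hp.
  pose proof (falling_nat_pos k (list_sum be) ltac:(lia)).
  destruct (Nat.eq_dec k 0) as [-> | Hk].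
  - replace (list_sum be) with 0%nat by lia. replace l with 0%nat by lia. simpl. field.
  - assert (0 < INR k) by (apply lt_0_INR; lia).
    field. repeat split; try apply pow_nonzero; lra.
Qed.

Lemma scaled_weight_close (al' be : list nat) (k l : nat) : (0 < k)%nat -> (l <= k)%nat ->
  length al' = length be -> (forall a, In a al' -> (a <= k)%nat) -> (list_sum be <= l)%nat ->
  Rabs (scaled_weight k l al' be - prodpow (grid_point al' k) 0 be)
    <= 2 * INR l * INR l / INR k.
Proof.
  intros Hk Hlk Hlen Hal Hdl. unfold scaled_weight. set (d := list_sum be) in *.
  assert (HkR : 0 < INR k) by (apply lt_0_INR; lia).
  assert (HL : INR l <= INR k) by (apply le_INR; auto).
  assert (HdR : INR d <= INR l) by (apply le_INR; auto).
  pose proof (pos_INR d).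
  (* the [alpha']-factor is close to [(alpha'/k)^beta] ... *)
  destruct (falling_prod_close be al' k (INR l) Hk Hlen Hal) as [P1 P2]; auto.
  { intros g Hg. apply le_INR. apply elem_le_list_sum in Hg. lia. }
  (* ... and the remaining factor is close to [(1 - d/k)^(l-d)], hence to 1 *)
  destruct (falling_scaled_close (l - d) (INR k - INR d) (INR k) (INR l) HkR)
    as [F1 F2]; [lra | rewrite minus_INR by auto; lra | auto |].
  assert (Hdk : 0 <= INR d / INR k <= 1).
  { split; [apply Rmult_le_pos; [| left; apply Rinv_0_lt_compat]; lra |].
    pose proof (Rabs_div_le1 (INR d) (INR k) HkR ltac:(lra)).
    pose proof (Rle_abs (INR d / INR k)). lra. }
  rewrite (Rdiv_minus_distr _ _ (INR k)), Rdiv_diag in F1 by lra.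
  pose proof (pow_one_minus_close (l - d) (INR d / INR k) Hdk) as Pw.
  rewrite <- (Rmult_1_r (prodpow _ 0 be)).
  eapply Rle_trans; [apply Rabs_mult_diff_le; auto; rewrite Rabs_R1; lra |].
  assert (Hrest : Rabs (falling (INR k - INR d) (l - d) / INR k ^ (l - d) - 1)
                  <= INR (l - d) * (INR l / INR k) + INR (l - d) * (INR d / INR k)).
  { eapply Rle_trans; [| apply Rplus_le_compat; [apply F1 | apply Pw]].
    eapply Rle_trans; [| apply Rabs_triang]. right. f_equal. ring. }
  rewrite minus_INR in Hrest by auto.
  assert (INR d * (INR l / INR k) + ((INR l - INR d) * (INR l / INR k)
            + (INR l - INR d) * (INR d / INR k)) <= 2 * INR l * INR l / INR k).
  { unfold Rdiv. assert (0 < / INR k) by (apply Rinv_0_lt_compat; auto).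
    rewrite <- !Rmult_assoc, <- !Rmult_plus_distr_r. apply Rmult_le_compat_r; nra. }
  fold d in P1. lra.
Qed.

Definition coeff_norm (n l : nat) (c : list nat -> R) : R :=
  sumR (monomials n l) (fun be => Rabs (c be)).

Lemma grid_point_simplex n k a0 al' : (0 < k)%nat ->
  In (a0 :: al') (compositions (S n) k) -> in_simplex n (grid_point al' k).
Proof.
  intros Hk Hal. apply compositions_spec in Hal as [Hlen Hsum].
  simpl in Hlen, Hsum. injection Hlen as Hlen.
  assert (HkR : 0 < INR k) by (apply lt_0_INR; lia).
  split.
  - intros i _. apply Rmult_le_pos; [apply pos_INR | left; now apply Rinv_0_lt_compat].
  - unfold grid_point, Rdiv. rewrite sumR_scalr, <- Hlen, sumR_nth.
    apply Rmult_le_reg_r with (INR k); auto. rewrite Rmult_assoc, Rinv_l by lra.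
    rewrite Rmult_1_r, Rmult_1_l. apply le_INR. lia.
Qed.

Lemma bern_coeff_lower_bound n l c k a0 al' : (0 < k)%nat -> (l <= k)%nat ->
  In (a0 :: al') (compositions (S n) k) ->
  peval n l c (grid_point al' k) - coeff_norm n l c * (2 * INR l * INR l / INR k)
  <= bern_coeff n l c k (a0 :: al') * (falling (INR k) l / INR k ^ l).
Proof.
  intros Hk Hlk Hal. apply compositions_spec in Hal as [Hlen Hsum].
  simpl in Hlen, Hsum. injection Hlen as Hlen.
  assert (Hal' : forall a, In a al' -> (a <= k)%nat)
    by (intros a Ha; apply elem_le_list_sum in Ha; lia).
  unfold bern_coeff, peval, coeff_norm.
  rewrite <- !sumR_scalr, <- sumR_minus.
  apply sumR_le. intros be Hbe. apply monomials_spec in Hbe as [Hl1 Hd].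
  rewrite (Rmult_assoc (c be)), elevation_weight_rescale by auto.
  pose proof (scaled_weight_close al' be k l Hk Hlk ltac:(lia) Hal' Hd) as T.
  set (m := prodpow (grid_point al' k) 0 be) in *.
  assert (Hdiff : Rabs (c be * m - c be * scaled_weight k l al' be)
                  <= Rabs (c be) * (2 * INR l * INR l / INR k)).
  { rewrite <- Rmult_minus_distr_l, Rabs_mult, Rabs_minus_sym.
    apply Rmult_le_compat_l; [apply Rabs_pos | exact T]. }
  pose proof (Rle_abs (c be * m - c be * scaled_weight k l al' be)). lra.
Qed.

Lemma bern_coeff_pos n l c k eps : 0 < eps ->
  (forall y, in_simplex n y -> eps <= peval n l c y) ->
  (0 < k)%nat -> (l <= k)%nat -> 2 * coeff_norm n l c * INR l * INR l < eps * INR k ->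
  forall al, In al (compositions (S n) k) -> 0 < bern_coeff n l c k al.
Proof.
  intros He Hp Hk Hlk Hbig al Hal.
  assert (HkR : 0 < INR k) by (apply lt_0_INR; lia).
  destruct al as [| a0 al']; [apply compositions_spec in Hal as [Hl _]; discriminate |].
  pose proof (bern_coeff_lower_bound n l c k a0 al' Hk Hlk Hal) as Hlow.
  pose proof (Hp _ (grid_point_simplex n k a0 al' Hk Hal)) as Hy.
  assert (HF : 0 < falling (INR k) l / INR k ^ l).
  { apply Rmult_lt_0_compat; [apply falling_nat_pos; auto |].
    apply Rinv_0_lt_compat, pow_lt; auto. }
  assert (coeff_norm n l c * (2 * INR l * INR l / INR k) < eps).
  { apply Rmult_lt_reg_r with (INR k); auto. unfold Rdiv.
    replace (coeff_norm n l c * (2 * INR l * INR l * / INR k) * INR k)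
      with (2 * coeff_norm n l c * INR l * INR l) by (field; lra). lra. }
  apply Rmult_lt_reg_r with (falling (INR k) l / INR k ^ l); auto. lra.
Qed.

(** By induction on [n]: minimizing over the last
    coordinate (one-dimensional extreme value theorem) yields a positive
    Lipschitz function on [[0,1]^(n-1)]. *)

Definition cube (n : nat) (x : nat -> R) : Prop :=
  forall i, (i < n)%nat -> 0 <= x i <= 1.

Definition lipschitz_on_cube (n : nat) (f : (nat -> R) -> R) (L : R) : Prop :=
  forall x y d, 0 <= d -> cube n x -> cube n y ->
    (forall i, (i < n)%nat -> Rabs (x i - y i) <= d) -> Rabs (f x - f y) <= L * d.

Definition upd (x : nat -> R) (n : nat) (t : R) : nat -> R :=
  fun i => if Nat.eqb i n then t else x i.

Definition clamp (t : R) : R := Rmin 1 (Rmax 0 t).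

Lemma clamp_lip t s : Rabs (clamp t - clamp s) <= Rabs (t - s).
Proof.
  unfold clamp, Rmin, Rmax.
  repeat destruct (Rle_dec _ _); unfold Rabs; repeat destruct (Rcase_abs _); lra.
Qed.

Lemma clamp_range t : 0 <= clamp t <= 1.
Proof. unfold clamp, Rmin, Rmax. repeat destruct (Rle_dec _ _); lra. Qed.

Lemma clamp_id t : 0 <= t <= 1 -> clamp t = t.
Proof. intros. unfold clamp, Rmin, Rmax. repeat destruct (Rle_dec _ _); lra. Qed.

Lemma upd_cube n x t : cube n x -> 0 <= t <= 1 -> cube (S n) (upd x n t).
Proof.
  intros Hx Ht i Hi. unfold upd. destruct (Nat.eqb_spec i n); auto. apply Hx. lia.
Qed.

Lemma upd_diff_le n x y t d : 0 <= d -> (forall i, (i < n)%nat -> Rabs (x i - y i) <= d) ->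
  forall i, (i < S n)%nat -> Rabs (upd x n t i - upd y n t i) <= d.
Proof.
  intros Hd H i Hi. unfold upd. destruct (Nat.eqb_spec i n).
  - rewrite Rminus_diag, Rabs_R0; auto.
  - apply H; lia.
Qed.

Lemma lipschitz_on_cube_ext n f L x y : lipschitz_on_cube n f L -> cube n x -> cube n y ->
  (forall i, (i < n)%nat -> x i = y i) -> f x = f y.
Proof.
  intros Hf Hx Hy Hxy. assert (Hd := Hf x y 0 (Rle_refl 0) Hx Hy).
  rewrite Rmult_0_r in Hd.
  assert (H0 : Rabs (f x - f y) <= 0).
  { apply Hd. intros i Hi. rewrite Hxy, Rminus_diag, Rabs_R0 by auto. lra. }
  pose proof (Rle_abs (f x - f y)). pose proof (Rle_abs (- (f x - f y))).
  rewrite Rabs_Ropp in *. lra.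
Qed.

Lemma last_coord_argmin n f L : 0 <= L -> lipschitz_on_cube (S n) f L ->
  forall x, cube n x -> exists t, 0 <= t <= 1 /\
    forall s, 0 <= s <= 1 -> f (upd x n t) <= f (upd x n s).
Proof.
  intros HL Hf x Hx.
  set (h := fun t => f (upd x n (clamp t))).
  assert (Hh : forall t s, Rabs (h t - h s) <= L * Rabs (t - s)).
  { intros t s. apply Hf; try apply upd_cube; auto using clamp_range, Rabs_pos.
    intros i Hi. unfold upd. destruct (Nat.eqb_spec i n); [apply clamp_lip |].
    rewrite Rminus_diag, Rabs_R0. apply Rabs_pos. }
  assert (Hcont : forall c, 0 <= c <= 1 -> continuity_pt h c).
  { intros c _ eps Heps. exists (eps / (L + 1)). split; [apply Rdiv_lt_0_compat; lra |].
    intros t [_ Hd]. simpl in *. unfold R_dist in *.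
    eapply Rle_lt_trans; [apply Hh |].
    apply Rle_lt_trans with (L * (eps / (L + 1))); [apply Rmult_le_compat_l; lra |].
    apply Rmult_lt_reg_r with (L + 1); [lra |].
    replace (L * (eps / (L + 1)) * (L + 1)) with (L * eps) by (field; lra). nra. }
  destruct (continuity_ab_min h 0 1) as [t [Hmin Ht]]; [lra | auto |].
  exists t. split; auto. intros s Hs.
  pose proof (Hmin s Hs) as H. unfold h in H. now rewrite !clamp_id in H.
Qed.

Lemma partial_min_lipschitz n f L (tm : (nat -> R) -> R) :
  lipschitz_on_cube (S n) f L ->
  (forall x, cube n x -> 0 <= tm x <= 1 /\
     forall s, 0 <= s <= 1 -> f (upd x n (tm x)) <= f (upd x n s)) ->
  lipschitz_on_cube n (fun x => f (upd x n (tm x))) L.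
Proof.
  intros Hf Htm x y d Hd Hx Hy Hxy.
  destruct (Htm x Hx) as [Hx1 Hx2], (Htm y Hy) as [Hy1 Hy2].
  assert (Hyx : forall i, (i < n)%nat -> Rabs (y i - x i) <= d)
    by (intros i Hi; rewrite Rabs_minus_sym; auto).
  (* moving from [x] to [y] at a fixed last coordinate costs at most [L d] *)
  pose proof (Hf _ _ d Hd (upd_cube n x _ Hx Hy1) (upd_cube n y _ Hy Hy1)
                (upd_diff_le n x y (tm y) d Hd Hxy)).
  pose proof (Hf _ _ d Hd (upd_cube n y _ Hy Hx1) (upd_cube n x _ Hx Hx1)
                (upd_diff_le n y x (tm x) d Hd Hyx)).
  pose proof (Hx2 (tm y) Hy1). pose proof (Hy2 (tm x) Hx1).
  pose proof (Rle_abs (f (upd x n (tm y)) - f (upd y n (tm y)))).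
  pose proof (Rle_abs (f (upd y n (tm x)) - f (upd x n (tm x)))).
  apply Rabs_le. lra.
Qed.

Lemma cube_lipschitz_pos_min n : forall (f : (nat -> R) -> R) L, 0 <= L ->
  lipschitz_on_cube n f L -> (forall x, cube n x -> 0 < f x) ->
  exists e, 0 < e /\ forall x, cube n x -> e <= f x.
Proof.
  induction n; intros f L HL Hf Hpos.
  - assert (H0 : cube 0 (fun _ => 0)) by (intros i Hi; lia).
    exists (f (fun _ => 0)). split; [auto |].
    intros x Hx. rewrite (lipschitz_on_cube_ext 0 f L x (fun _ => 0)); auto; [lra | lia].
  - set (tm := fun x => epsilon (inhabits 0) (fun t => 0 <= t <= 1 /\
               forall s, 0 <= s <= 1 -> f (upd x n t) <= f (upd x n s))).
    assert (Htm : forall x, cube n x -> 0 <= tm x <= 1 /\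
               forall s, 0 <= s <= 1 -> f (upd x n (tm x)) <= f (upd x n s)).
    { intros x Hx. apply epsilon_spec. now apply (last_coord_argmin n f L). }
    destruct (IHn (fun x => f (upd x n (tm x))) L HL) as [e [He Hmin]].
    + now apply partial_min_lipschitz.
    + intros x Hx. apply Hpos, upd_cube; [auto | apply Htm; auto].
    + exists e. split; [auto |]. intros x Hx.
      assert (Hxn : cube n x) by (intros i Hi; apply Hx; lia).
      assert (Hlast : 0 <= x n <= 1) by (apply Hx; lia).
      assert (Hx' : f (upd x n (x n)) = f x).
      { apply (lipschitz_on_cube_ext (S n) f L); auto using upd_cube.
        intros i _. unfold upd. destruct (Nat.eqb_spec i n); congruence. }
      pose proof (Hmin x Hxn). pose proof (proj2 (Htm x Hxn) (x n) Hlast). lra.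
Qed.

(** A polynomial positive on the simplex is bounded below there by a positive
    constant: compose it with the Lipschitz retraction [to_simplex] of the
    cube onto the simplex and apply [cube_lipschitz_pos_min]. *)

Lemma prodpow_lip x y i be e : 0 <= e ->
  (forall j, (j < length be)%nat -> Rabs (x (i + j)%nat) <= 1 /\
     Rabs (y (i + j)%nat) <= 1 /\ Rabs (x (i + j)%nat - y (i + j)%nat) <= e) ->
  Rabs (prodpow x i be - prodpow y i be) <= INR (list_sum be) * e.
Proof.
  intros He. revert i; induction be; intros i H; simpl.
  - rewrite Rminus_diag, Rabs_R0; lra.
  - assert (H0 := H 0%nat ltac:(simpl; lia)). rewrite Nat.add_0_r in H0.
    destruct H0 as [H1 [H2 H3]].
    assert (H' : forall j, (j < length be)%nat -> Rabs (x (S i + j)%nat) <= 1 /\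
        Rabs (y (S i + j)%nat) <= 1 /\ Rabs (x (S i + j)%nat - y (S i + j)%nat) <= e).
    { intros j Hj. replace (S i + j)%nat with (i + S j)%nat by lia. apply H. simpl; lia. }
    eapply Rle_trans.
    + apply Rabs_mult_diff_le; [now apply Rabs_pow_le1 |].
      apply prodpow_le1. intros j Hj; apply H'; auto.
    + rewrite plus_INR, Rmult_plus_distr_r.
      apply Rplus_le_compat; [now apply Rabs_pow_diff_le | now apply IHbe].
Qed.

Lemma peval_lip n l c x y d : 0 <= d ->
  (forall i, (i < n)%nat -> Rabs (x i) <= 1 /\ Rabs (y i) <= 1 /\ Rabs (x i - y i) <= d) ->
  Rabs (peval n l c x - peval n l c y) <= coeff_norm n l c * INR l * d.
Proof.
  intros Hd H. unfold peval, coeff_norm. rewrite <- sumR_minus.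
  eapply Rle_trans; [apply sumR_abs |]. rewrite <- !sumR_scalr. apply sumR_le.
  intros be Hbe. apply monomials_spec in Hbe as [Hl Hs].
  rewrite <- Rmult_minus_distr_l, Rabs_mult, Rmult_assoc.
  apply Rmult_le_compat_l; [apply Rabs_pos |].
  eapply Rle_trans; [apply (prodpow_lip x y 0 be d Hd) |].
  - intros j Hj. apply H. lia.
  - apply Rmult_le_compat_r; auto. now apply le_INR.
Qed.

Lemma peval_ext n l c x y : (forall i, x i = y i) -> peval n l c x = peval n l c y.
Proof.
  intros H. unfold peval. apply sumR_ext. intros be _. f_equal.
  generalize 0%nat. induction be; intros i; simpl; [| rewrite H, IHbe]; reflexivity.
Qed.

Definition to_simplex (n : nat) (u : nat -> R) : nat -> R :=
  fun i => u i / Rmax 1 (sumR (seq 0 n) u).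

Lemma simplex_cube n y : in_simplex n y -> cube n y.
Proof.
  intros [H1 H2] i Hi. split; auto.
  assert (y i <= sumR (seq 0 n) y); [| lra].
  apply sumR_ge_term; [| apply in_seq; lia].
  intros b Hb; apply in_seq in Hb; apply H1; lia.
Qed.

Lemma to_simplex_simplex n u : cube n u -> in_simplex n (to_simplex n u).
Proof.
  intros Hu. unfold to_simplex, Rdiv. set (M := Rmax 1 (sumR (seq 0 n) u)).
  assert (HM : 1 <= M) by apply Rmax_l.
  assert (HS : sumR (seq 0 n) u <= M) by apply Rmax_r.
  split.
  - intros i Hi. apply Rmult_le_pos; [apply Hu; auto | left; apply Rinv_0_lt_compat; lra].
  - rewrite sumR_scalr.
    apply Rmult_le_reg_r with M; [lra |].
    rewrite Rmult_assoc, Rinv_l, Rmult_1_r, Rmult_1_l by lra. auto.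
Qed.

Lemma to_simplex_id n y : in_simplex n y -> forall i, to_simplex n y i = y i.
Proof. intros [_ H] i. unfold to_simplex. rewrite Rmax_left by auto. field. Qed.

Lemma Rmax_1_diff a b : Rabs (Rmax 1 a - Rmax 1 b) <= Rabs (a - b).
Proof.
  unfold Rmax. repeat destruct (Rle_dec _ _); unfold Rabs; repeat destruct (Rcase_abs _); lra.
Qed.

Lemma to_simplex_lip n u v d : 0 <= d -> cube n u -> cube n v ->
  (forall i, (i < n)%nat -> Rabs (u i - v i) <= d) ->
  forall i, (i < n)%nat -> Rabs (to_simplex n u i - to_simplex n v i) <= (INR n + 1) * d.
Proof.
  intros Hd Hu Hv H i Hi. unfold to_simplex.
  set (M := Rmax 1 (sumR (seq 0 n) u)). set (M' := Rmax 1 (sumR (seq 0 n) v)).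
  assert (HM : 1 <= M) by apply Rmax_l. assert (HM' : 1 <= M') by apply Rmax_l.
  assert (HMM : Rabs (M' - M) <= INR n * d).
  { rewrite Rabs_minus_sym. eapply Rle_trans; [apply Rmax_1_diff | now apply sumR_diff_le]. }
  replace (u i / M - v i / M') with ((u i - v i) / M + v i / M' * ((M' - M) / M)) by (field; lra).
  eapply Rle_trans; [apply Rabs_triang |]. rewrite Rabs_mult.
  assert (Hinv : forall a, Rabs (a / M) <= Rabs a).
  { intros a. unfold Rdiv. rewrite Rabs_mult, Rabs_inv, (Rabs_right M) by lra.
    rewrite <- (Rmult_1_r (Rabs a)) at 2. apply Rmult_le_compat_l; [apply Rabs_pos |].
    rewrite <- Rinv_1. apply Rinv_le_contravar; lra. }
  assert (Hvi : Rabs (v i / M') <= 1).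
  { apply Rabs_div_le1; [lra |]. destruct (Hv i Hi). lra. }
  pose proof (Hinv (u i - v i)). pose proof (H i Hi).
  assert (Rabs (v i / M') * Rabs ((M' - M) / M) <= 1 * (INR n * d)).
  { apply Rmult_le_compat; auto using Rabs_pos. eapply Rle_trans; [apply Hinv | auto]. }
  lra.
Qed.

Lemma peval_pos_min n l c : (forall y, in_simplex n y -> 0 < peval n l c y) ->
  exists eps, 0 < eps /\ forall y, in_simplex n y -> eps <= peval n l c y.
Proof.
  intros Hp.
  assert (HC : 0 <= coeff_norm n l c) by (apply sumR_nonneg; intros; apply Rabs_pos).
  pose proof (pos_INR l). pose proof (pos_INR n).
  destruct (cube_lipschitz_pos_min n (fun u => peval n l c (to_simplex n u))
              (coeff_norm n l c * INR l * (INR n + 1))) as [e [He Hmin]].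
  - apply Rmult_le_pos; [apply Rmult_le_pos |]; lra.
  - intros x y d Hd Hx Hy Hxy.
    assert (Hbox : forall w, cube n w -> forall i, (i < n)%nat -> Rabs (to_simplex n w i) <= 1).
    { intros w Hw i Hi. destruct (simplex_cube n _ (to_simplex_simplex n w Hw) i Hi).
      rewrite Rabs_right; lra. }
    eapply Rle_trans.
    + apply (peval_lip n l c _ _ ((INR n + 1) * d)); [nra |].
      intros i Hi. repeat split; auto. now apply to_simplex_lip.
    + right; ring.
  - intros x Hx. apply Hp, to_simplex_simplex; auto.
  - exists e. split; [auto |]. intros y Hy.
    pose proof (Hmin y (simplex_cube n y Hy)) as Hle. simpl in Hle.
    now rewrite (peval_ext n l c (to_simplex n y) y) in Hle by now apply to_simplex_id.
Qed.

Lemma fact_prod_pos al : 0 < fact_prod al.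
Proof. induction al; simpl; [lra | apply Rmult_lt_0_compat; auto using fact_pos_R]. Qed.

Lemma prodpow_nonneg f i be :
  (forall j, (j < length be)%nat -> 0 <= f (i + j)%nat) -> 0 <= prodpow f i be.
Proof.
  revert i; induction be; intros i H; simpl; [lra |].
  apply Rmult_le_pos.
  - apply pow_le. rewrite <- (Nat.add_0_r i). apply H. simpl; lia.
  - apply IHbe. intros j Hj. replace (S i + j)%nat with (i + S j)%nat by lia.
    apply H. simpl; lia.
Qed.

Lemma bernstein_nonneg n k al y :
  in_simplex n y -> In al (compositions (S n) k) -> 0 <= bernstein n k al y.
Proof.
  intros [Hy1 Hy2] Hal. apply compositions_spec in Hal as [Hl _].
  unfold bernstein. apply Rmult_le_pos.
  - apply Rmult_le_pos; [left; apply fact_pos_R |].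
    left; apply Rinv_0_lt_compat, fact_prod_pos.
  - apply prodpow_nonneg. intros [| j] Hj; simpl; [lra | apply Hy1; lia].
Qed.

(* A polynomial with a positive family of Bernstein coefficients is positive
   on the simplex, the Bernstein polynomials being a nonnegative partition of
   unity there. *)
Lemma bernstein_pos_peval_pos n l c k b : is_bernstein_coeffs n l c k b ->
  (forall al, In al (compositions (S n) k) -> 0 < b al) ->
  forall y, in_simplex n y -> 0 < peval n l c y.
Proof.
  intros Hb Hpos y Hy. rewrite (Hb y).
  destruct (sumR_pos_ex (compositions (S n) k) (fun al => bernstein n k al y))
    as [al [Hal HB]]; [rewrite bernstein_sum_one; lra |].
  eapply Rlt_le_trans; [| apply (sumR_ge_term _ _ al); auto].
  - apply Rmult_lt_0_compat; auto.
  - intros al' Hal'. apply Rmult_le_pos; [left; auto | now apply bernstein_nonneg].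
Qed.

(* If all degree-[k] Bernstein coefficient families of [q] are positive, then
   degree-[k] Bernstein coefficients are unique: a nonzero difference of two
   families of some polynomial could be added to those of [q] to produce a
   negative coefficient. *)
Lemma bernstein_coeffs_unique n l p q k bq bp bp' :
  (forall b, is_bernstein_coeffs n l q k b ->
     forall al, In al (compositions (S n) k) -> 0 < b al) ->
  is_bernstein_coeffs n l q k bq ->
  is_bernstein_coeffs n l p k bp -> is_bernstein_coeffs n l p k bp' ->
  forall al, In al (compositions (S n) k) -> bp al = bp' al.
Proof.
  intros Hq Hbq Hbp Hbp' al Hal.
  destruct (Req_dec (bp al) (bp' al)) as [E | E]; [exact E | exfalso].
  set (t := - (bq al + 1) / (bp al - bp' al)).
  set (b := fun be => bq be + t * (bp be - bp' be)).
  assert (Hb : is_bernstein_coeffs n l q k b).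
  { intros x. unfold b.
    rewrite (sumR_ext _ _ (fun be => bq be * bernstein n k be x +
        t * (bp be * bernstein n k be x - bp' be * bernstein n k be x))) by (intros; ring).
    rewrite sumR_plus, sumR_scal, sumR_minus, <- (Hbq x), <- (Hbp x), <- (Hbp' x). ring. }
  assert (Hneg : b al = -1) by (unfold b, t; field; lra).
  pose proof (Hq b Hb al Hal). lra.
Qed.

Lemma large_degree (C eps : R) (l : nat) : 0 < eps ->
  exists k, (0 < k)%nat /\ (l <= k)%nat /\ C < eps * INR k.
Proof.
  intros He. destruct (INR_unbounded (C / eps)) as [N HN].
  exists (N + l + 1)%nat. split; [lia | split; [lia |]].
  assert (INR N <= INR (N + l + 1)) by (apply le_INR; lia).
  apply Rmult_lt_reg_r with (/ eps); [now apply Rinv_0_lt_compat |].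
  replace (eps * INR (N + l + 1) * / eps) with (INR (N + l + 1)) by (field; lra).
  unfold Rdiv in HN. lra.
Qed.

Theorem corollary5p4 (n l : nat) (p q : list nat -> R) :
  (forall x : nat -> R, in_simplex n x -> 0 < peval n l p x / peval n l q x) ->
  (forall j : nat, (l <= j)%nat ->
     forall b : list nat -> R, is_bernstein_coeffs n l q j b ->
     forall alpha, In alpha (compositions (S n) j) -> 0 < b alpha) ->
  exists k : nat, (l <= k)%nat /\
    (exists bp bq, is_bernstein_coeffs n l p k bp /\ is_bernstein_coeffs n l q k bq) /\
    (forall bp bq : list nat -> R,
       is_bernstein_coeffs n l p k bp -> is_bernstein_coeffs n l q k bq ->
       forall alpha, In alpha (compositions (S n) k) -> 0 < bp alpha / bq alpha).
Proof.
  intros Hf Hq.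
  (* [q], hence also [p = (p/q) q], is positive on the simplex *)
  assert (Hql : is_bernstein_coeffs n l q l (bern_coeff n l q l))
    by (apply bern_coeff_spec; lia).
  assert (Hqpos : forall y, in_simplex n y -> 0 < peval n l q y)
    by (apply (bernstein_pos_peval_pos n l q l _ Hql), (Hq l); auto).
  assert (Hppos : forall y, in_simplex n y -> 0 < peval n l p y).
  { intros y Hy. pose proof (Hf y Hy). pose proof (Hqpos y Hy).
    replace (peval n l p y) with (peval n l p y / peval n l q y * peval n l q y)
      by (field; lra).
    now apply Rmult_lt_0_compat. }
  destruct (peval_pos_min n l p Hppos) as [eps [He Heps]].
  destruct (large_degree (2 * coeff_norm n l p * INR l * INR l) eps l He)
    as [k [Hk [Hlk Hbig]]].
  exists k. split; [| split]; auto.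
  - exists (bern_coeff n l p k), (bern_coeff n l q k). split; now apply bern_coeff_spec.
  - intros bp bq Hbp Hbq al Hal.
    rewrite (bernstein_coeffs_unique n l p q k bq bp (bern_coeff n l p k)
               (Hq k Hlk) Hbq Hbp (bern_coeff_spec n l p k Hlk) al Hal).
    apply Rdiv_lt_0_compat; [now apply (bern_coeff_pos n l p k eps) | now apply (Hq k)].
Qed.
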